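(* Let $\mathcal{F},\mathcal{G}:(\mathcal{K},c)\to\mathcal{K}'$ be bilax functors and $b:A\to A$ a $c$-bimonad in $\mathcal{K}$ with structure $(\mu,\eta,\Delta,\varepsilon)$. (i) If $\phi:\mathcal{F}\Rightarrow\mathcal{G}$ is a colax natural transformation of colax functors, then $\lambda:=(\mathcal{G}(\eta)\circ1_{\phi_A})\cdot\phi_{\mathrm{id}_A}\cdot(1_{\phi_A}\circ\mathcal{F}^0_A):\phi_A\Rightarrow\mathcal{G}(b)\circ\phi_A$ makes $\phi_A$ a left comodule over the comonad $\mathcal{G}(b)$ with comultiplication $\mathcal{G}_{2;b,b}\cdot\mathcal{G}(\Delta)$ and counit $\mathcal{G}_{0;A}\cdot\mathcal{G}(\varepsilon)$. (ii) Dually, if $\psi:\mathcal{F}\Rightarrow\mathcal{G}$ is a lax natural transformation of lax functors, then $\rhd:=(1_{\psi_A}\circ\mathcal{F}_{0;A})\cdot\psi_{\mathrm{id}_A}\cdot(\mathcal{G}(\varepsilon)\circ1_{\psi_A}):\mathcal{G}(b)\circ\psi_A\Rightarrow\psi_A$ makes $\psi_A$ a left module over the monad $\mathcal{G}(b)$ with multiplication $\mathcal{G}(\mu)\cdot\mathcal{G}^2_{b,b}$ and unit $\mathcal{G}(\eta)\cdot\mathcal{G}^0_A$.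
   Context: Conventions: $\circ$ horizontal composition, $\cdot$ vertical composition ($\beta\cdot\alpha$: first $\alpha$), $1$ identity 2-cells. A bilax functor $(\mathcal{F},\nu):(\mathcal{K},c)\to\mathcal{K}'$ (where $c$ is a Yang–Baxter operator of $\mathcal{K}$, i.e. natural 2-cells $c_{g,f}:g\circ f\Rightarrow f\circ g$ for 1-endocells satisfying the Yang–Baxter equation and $c_{\mathrm{id},f}=c_{f,\mathrm{id}}=1$) is simultaneously a lax functor (structure $\mathcal{F}^2_{g,f}:\mathcal{F}(g)\circ\mathcal{F}(f)\Rightarrow\mathcal{F}(gf)$, $\mathcal{F}^0_A:\mathrm{id}\Rightarrow\mathcal{F}(\mathrm{id}_A)$) and a colax functor (structure $\mathcal{F}_{2;g,f}:\mathcal{F}(gf)\Rightarrow\mathcal{F}(g)\circ\mathcal{F}(f)$, $\mathcal{F}_{0;A}:\mathcal{F}(\mathrm{id}_A)\Rightarrow\mathrm{id}$) with a Yang–Baxter operator $\nu$ satisfying the distributive-law and bilaxity axioms; in particular $\mathcal{F}^0_A\circ\mathcal{F}^0_A=\mathcal{F}_{2;\mathrm{id},\mathrm{id}}\cdot\mathcal{F}^0_A$, $\mathcal{F}_{0;A}\circ\mathcal{F}_{0;A}=\mathcal{F}_{0;A}\cdot\mathcal{F}^2_{\mathrm{id},\mathrm{id}}$, $\mathcal{F}_{0;A}\cdot\mathcal{F}^0_A=1$. A $c$-bimonad $b$ is a 1-endocell with monad $(\mu,\eta)$ and comonad $(\Delta,\varepsilon)$ such that $c_{b,b}$ is a left and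 right distributive law for both, $(\mu\circ\mu)\cdot(1\circ c_{b,b}\circ1)\cdot(\Delta\circ\Delta)=\Delta\cdot\mu$, $\varepsilon\circ\varepsilon=\varepsilon\cdot\mu$, $\eta\circ\eta=\Delta\cdot\eta$, $\varepsilon\cdot\eta=1$. A colax natural transformation $\phi:\mathcal{F}\Rightarrow\mathcal{G}$ of colax functors: 1-cells $\phi_A:\mathcal{F}(A)\to\mathcal{G}(A)$ and 2-cells $\phi_f:\phi_B\circ\mathcal{F}(f)\Rightarrow\mathcal{G}(f)\circ\phi_A$ natural in $f$ with $(\mathcal{G}_{2;g,f}\circ1)\cdot\phi_{gf}=(1\circ\phi_f)\cdot(\phi_g\circ1)\cdot(1\circ\mathcal{F}_{2;g,f})$ and $(\mathcal{G}_{0;A}\circ1)\cdot\phi_{\mathrm{id}_A}=1\circ\mathcal{F}_{0;A}$. A lax natural transformation $\psi:\mathcal{F}\Rightarrow\mathcal{G}$ of lax functors: 2-cells $\psi_f:\mathcal{G}(f)\circ\psi_A\Rightarrow\psi_B\circ\mathcal{F}(f)$ natural with $\psi_{gf}\cdot(\mathcal{G}^2_{g,f}\circ1)=(1\circ\mathcal{F}^2_{g,f})\cdot(\psi_g\circ1)\cdot(1\circ\psi_f)$ and $\psi_{\mathrm{id}_A}\cdot(\mathcal{G}^0_A\circ1)=1\circ\mathcal{F}^0_A$. A left comodule over a comonad $(d,\Delta_d,\varepsilon_d)$ on $A$ is a 1-cell $x$ into $A$ with $\lambda:x\Rightarrow d\circ x$ such that $(\Delta_d\circ1)\cdot\lambda=(1\circ\lambda)\cdot\lambda$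 and $(\varepsilon_d\circ1)\cdot\lambda=1$; left modules over monads are defined dually. *)

Set Implicit Arguments.
Unset Strict Implicit.

(* Strict 2-categories.  Strictness (associativity and unit laws of     *)
(* 1-cell composition) holds as equalities of 1-cells; the coherence    *)
(* 2-cells are the identity 2-cells transported along these equalities  *)
(* ([eqc] below).                                                       *)

Unset Implicit Arguments.
Record twodata := TwoData {
  ob : Type;
  hom : ob -> ob -> Type;
  c2 : forall A B : ob, hom A B -> hom A B -> Type;
  idm : forall A : ob, hom A A;
  comp : forall A B C : ob, hom B C -> hom A B -> hom A C;
  id2 : forall (A B : ob) (f : hom A B), c2 A B f f;
  vcomp : forall (A B : ob) (f g h : hom A B), c2 A B g h -> c2 A B f g -> c2 A B f h;
  hcomp : forall (A B C : ob) (g g' : hom B C) (f f' : hom A B),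
      c2 B C g g' -> c2 A B f f' -> c2 A C (comp A B C g f) (comp A B C g' f')
}.

Set Implicit Arguments.
Arguments hom {_} _ _.
Arguments c2 {_ _ _} _ _.
Arguments idm {_} _.
Arguments comp {_ _ _ _} _ _.
Arguments id2 {_ _ _} _.
Arguments vcomp {_ _ _ _ _ _} _ _.
Arguments hcomp {_ _ _ _ _ _ _ _} _ _.

(* g ⊚ f : first f then g;  β • α : vertical, first α;  β ⊙ α : horizontal *)
Notation "g ⊚ f" := (comp g f) (at level 40, left associativity).
Notation "β ⊙ α" := (hcomp β α) (at level 40, left associativity).
Notation "β • α" := (vcomp β α) (at level 50, left associativity).

Definition eqc {K : twodata} {A B : ob K} {f g : hom A B} (e : f = g) : c2 f g :=
  match e in _ = g0 return c2 f g0 with eq_refl => id2 f end.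

Record is_twocat (K : twodata) : Prop := {
  compA : forall (A B C D : ob K) (h : hom C D) (g : hom B C) (f : hom A B),
      h ⊚ (g ⊚ f) = (h ⊚ g) ⊚ f;
  comp1l : forall (A B : ob K) (f : hom A B), idm B ⊚ f = f;
  comp1r : forall (A B : ob K) (f : hom A B), f ⊚ idm A = f;
  vcompA : forall (A B : ob K) (f g h k : hom A B)
      (γ : c2 h k) (β : c2 g h) (α : c2 f g), γ • (β • α) = (γ • β) • α;
  vcomp1l : forall (A B : ob K) (f g : hom A B) (α : c2 f g), id2 g • α = α;
  vcomp1r : forall (A B : ob K) (f g : hom A B) (α : c2 f g), α • id2 f = α;
  hcomp_id2 : forall (A B C : ob K) (g : hom B C) (f : hom A B),
      id2 g ⊙ id2 f = id2 (g ⊚ f);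
  interchange : forall (A B C : ob K) (g g' g'' : hom B C) (f f' f'' : hom A B)
      (β' : c2 g' g'') (β : c2 g g') (α' : c2 f' f'') (α : c2 f f'),
      (β' • β) ⊙ (α' • α) = (β' ⊙ α') • (β ⊙ α);
  hcomp1l : forall (A B : ob K) (f f' : hom A B) (α : c2 f f'),
      id2 (idm B) ⊙ α = eqc (eq_sym (comp1l f')) • α • eqc (comp1l f);
  hcomp1r : forall (A B : ob K) (f f' : hom A B) (α : c2 f f'),
      α ⊙ id2 (idm A) = eqc (eq_sym (comp1r f')) • α • eqc (comp1r f);
  hcompA : forall (A B C D : ob K) (h h' : hom C D) (g g' : hom B C) (f f' : hom A B)
      (γ : c2 h h') (β : c2 g g') (α : c2 f f'),
      γ ⊙ (β ⊙ α) = eqc (eq_sym (compA h' g' f')) • ((γ ⊙ β) ⊙ α) • eqc (compA h g f)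
}.

Record twocat := TwoCat { tdata :> twodata; tlaws : is_twocat tdata }.

Definition cA {K : twocat} {A B C D : ob K} (h : hom C D) (g : hom B C) (f : hom A B)
  : h ⊚ (g ⊚ f) = (h ⊚ g) ⊚ f := compA (tlaws K) h g f.
Definition c1l {K : twocat} {A B : ob K} (f : hom A B) : idm B ⊚ f = f :=
  comp1l (tlaws K) f.
Definition c1r {K : twocat} {A B : ob K} (f : hom A B) : f ⊚ idm A = f :=
  comp1r (tlaws K) f.

Definition yb_data (K : twocat) :=
  forall (A : ob K) (g f : hom A A), c2 (g ⊚ f) (f ⊚ g).

Record is_YB (K : twocat) (c : yb_data K) : Prop := {
  yb_nat : forall (A : ob K) (g g' f f' : hom A A) (β : c2 g g') (α : c2 f f'),
      (α ⊙ β) • c A g f = c A g' f' • (β ⊙ α);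
  yb_eq : forall (A : ob K) (h g f : hom A A),
      (c A g f ⊙ id2 h) • eqc (cA g f h) • (id2 g ⊙ c A h f)
        • eqc (eq_sym (cA g h f)) • (c A h g ⊙ id2 f)
      = eqc (cA f g h) • (id2 f ⊙ c A h g) • eqc (eq_sym (cA f h g))
        • (c A h f ⊙ id2 g) • eqc (cA h f g) • (id2 h ⊙ c A g f)
        • eqc (eq_sym (cA h g f));
  yb_idl : forall (A : ob K) (f : hom A A),
      c A (idm A) f = eqc (eq_sym (c1r f)) • eqc (c1l f);
  yb_idr : forall (A : ob K) (f : hom A A),
      c A f (idm A) = eqc (eq_sym (c1l f)) • eqc (c1r f)
}.

Record is_monad (K : twocat) (A : ob K) (b : hom A A)
    (mu : c2 (b ⊚ b) b) (eta : c2 (idm A) b) : Prop := {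
  monad_assoc : mu • (mu ⊙ id2 b) = mu • (id2 b ⊙ mu) • eqc (eq_sym (cA b b b));
  monad_unitl : mu • (eta ⊙ id2 b) = eqc (c1l b);
  monad_unitr : mu • (id2 b ⊙ eta) = eqc (c1r b)
}.

Record is_comonad (K : twocat) (A : ob K) (b : hom A A)
    (del : c2 b (b ⊚ b)) (eps : c2 b (idm A)) : Prop := {
  comonad_coassoc : (del ⊙ id2 b) • del = eqc (cA b b b) • (id2 b ⊙ del) • del;
  comonad_counitl : (eps ⊙ id2 b) • del = eqc (eq_sym (c1l b));
  comonad_counitr : (id2 b ⊙ eps) • del = eqc (eq_sym (c1r b))
}.

Record is_monad_distlaw (K : twocat) (A : ob K) (b : hom A A)
    (mu : c2 (b ⊚ b) b) (eta : c2 (idm A) b) (l : c2 (b ⊚ b) (b ⊚ b)) : Prop := {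
  mdl_mul_left : l • (mu ⊙ id2 b) =
      (id2 b ⊙ mu) • eqc (eq_sym (cA b b b)) • (l ⊙ id2 b) • eqc (cA b b b)
        • (id2 b ⊙ l) • eqc (eq_sym (cA b b b));
  mdl_mul_right : l • (id2 b ⊙ mu) =
      (mu ⊙ id2 b) • eqc (cA b b b) • (id2 b ⊙ l) • eqc (eq_sym (cA b b b))
        • (l ⊙ id2 b) • eqc (cA b b b);
  mdl_unit_left : l • (eta ⊙ id2 b) = (id2 b ⊙ eta) • eqc (eq_sym (c1r b)) • eqc (c1l b);
  mdl_unit_right : l • (id2 b ⊙ eta) = (eta ⊙ id2 b) • eqc (eq_sym (c1l b)) • eqc (c1r b)
}.

Record is_comonad_distlaw (K : twocat) (A : ob K) (b : hom A A)
    (del : c2 b (b ⊚ b)) (eps : c2 b (idm A)) (l : c2 (b ⊚ b) (b ⊚ b)) : Prop := {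
  cdl_comul_left : (del ⊙ id2 b) • l =
      eqc (cA b b b) • (id2 b ⊙ l) • eqc (eq_sym (cA b b b)) • (l ⊙ id2 b)
        • eqc (cA b b b) • (id2 b ⊙ del);
  cdl_comul_right : (id2 b ⊙ del) • l =
      eqc (eq_sym (cA b b b)) • (l ⊙ id2 b) • eqc (cA b b b) • (id2 b ⊙ l)
        • eqc (eq_sym (cA b b b)) • (del ⊙ id2 b);
  cdl_counit_left : (eps ⊙ id2 b) • l = eqc (eq_sym (c1l b)) • eqc (c1r b) • (id2 b ⊙ eps);
  cdl_counit_right : (id2 b ⊙ eps) • l = eqc (eq_sym (c1r b)) • eqc (c1l b) • (eps ⊙ id2 b)
}.

Definition bbbb_eq (K : twocat) (A : ob K) (b : hom A A)
  : (b ⊚ b) ⊚ (b ⊚ b) = (b ⊚ (b ⊚ b)) ⊚ b :=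
  eq_trans (cA (b ⊚ b) b b) (f_equal (fun x => x ⊚ b) (eq_sym (cA b b b))).

Record is_c_bimonad (K : twocat) (c : yb_data K) (A : ob K) (b : hom A A)
    (mu : c2 (b ⊚ b) b) (eta : c2 (idm A) b)
    (del : c2 b (b ⊚ b)) (eps : c2 b (idm A)) : Prop := {
  bm_monad : is_monad mu eta;
  bm_comonad : is_comonad del eps;
  bm_distlaw_monad : is_monad_distlaw mu eta (c A b b);
  bm_distlaw_comonad : is_comonad_distlaw del eps (c A b b);
  bm_compat : (mu ⊙ mu) • eqc (eq_sym (bbbb_eq b)) • ((id2 b ⊙ c A b b) ⊙ id2 b)
                • eqc (bbbb_eq b) • (del ⊙ del) = del • mu;
  bm_counit_mul : eps ⊙ eps = eqc (eq_sym (c1l (idm A))) • eps • mu;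
  bm_unit_comul : eta ⊙ eta = del • eta • eqc (c1l (idm A));
  bm_counit_unit : eps • eta = id2 (idm A)
}.

Unset Implicit Arguments.
Record prefunctor (K K' : twocat) := Prefunctor {
  fob : ob K -> ob K';
  fhom : forall A B : ob K, hom A B -> hom (fob A) (fob B);
  fc2 : forall (A B : ob K) (f g : hom A B), c2 f g -> c2 (fhom A B f) (fhom A B g);
  fc2_id : forall (A B : ob K) (f : hom A B), fc2 A B f f (id2 f) = id2 (fhom A B f);
  fc2_comp : forall (A B : ob K) (f g h : hom A B) (β : c2 g h) (α : c2 f g),
      fc2 A B f h (β • α) = fc2 A B g h β • fc2 A B f g α
}.
Set Implicit Arguments.
Arguments fob {K K'} _ _.
Arguments fhom {K K'} _ {A B} _.
Arguments fc2 {K K'} _ {A B f g} _.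

Record lax_structure (K K' : twocat) (F : prefunctor K K') := {
  lax2 : forall (A B C : ob K) (g : hom B C) (f : hom A B),
      c2 (fhom F g ⊚ fhom F f) (fhom F (g ⊚ f));
  lax0 : forall A : ob K, c2 (idm (fob F A)) (fhom F (idm A))
}.
Arguments lax2 {K K' F} _ {A B C} _ _.
Arguments lax0 {K K' F} _ _.

Record is_lax (K K' : twocat) (F : prefunctor K K') (L : lax_structure F) : Prop := {
  lax2_nat : forall (A B C : ob K) (g g' : hom B C) (f f' : hom A B)
      (β : c2 g g') (α : c2 f f'),
      fc2 F (β ⊙ α) • lax2 L g f = lax2 L g' f' • (fc2 F β ⊙ fc2 F α);
  lax2_assoc : forall (A B C D : ob K) (h : hom C D) (g : hom B C) (f : hom A B),
      lax2 L h (g ⊚ f) • (id2 (fhom F h) ⊙ lax2 L g f)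
      = eqc (f_equal (fhom F) (eq_sym (cA h g f))) • lax2 L (h ⊚ g) f
        • (lax2 L h g ⊙ id2 (fhom F f)) • eqc (cA (fhom F h) (fhom F g) (fhom F f));
  lax_unitl : forall (A B : ob K) (f : hom A B),
      lax2 L (idm B) f • (lax0 L B ⊙ id2 (fhom F f))
      = eqc (f_equal (fhom F) (eq_sym (c1l f))) • eqc (c1l (fhom F f));
  lax_unitr : forall (A B : ob K) (f : hom A B),
      lax2 L f (idm A) • (id2 (fhom F f) ⊙ lax0 L A)
      = eqc (f_equal (fhom F) (eq_sym (c1r f))) • eqc (c1r (fhom F f))
}.

Record colax_structure (K K' : twocat) (F : prefunctor K K') := {
  colax2 : forall (A B C : ob K) (g : hom B C) (f : hom A B),
      c2 (fhom F (g ⊚ f)) (fhom F g ⊚ fhom F f);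
  colax0 : forall A : ob K, c2 (fhom F (idm A)) (idm (fob F A))
}.
Arguments colax2 {K K' F} _ {A B C} _ _.
Arguments colax0 {K K' F} _ _.

Record is_colax (K K' : twocat) (F : prefunctor K K') (Cs : colax_structure F) : Prop := {
  colax2_nat : forall (A B C : ob K) (g g' : hom B C) (f f' : hom A B)
      (β : c2 g g') (α : c2 f f'),
      (fc2 F β ⊙ fc2 F α) • colax2 Cs g f = colax2 Cs g' f' • fc2 F (β ⊙ α);
  colax2_coassoc : forall (A B C D : ob K) (h : hom C D) (g : hom B C) (f : hom A B),
      (id2 (fhom F h) ⊙ colax2 Cs g f) • colax2 Cs h (g ⊚ f)
      = eqc (eq_sym (cA (fhom F h) (fhom F g) (fhom F f))) • (colax2 Cs h g ⊙ id2 (fhom F f))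
        • colax2 Cs (h ⊚ g) f • eqc (f_equal (fhom F) (cA h g f));
  colax_counitl : forall (A B : ob K) (f : hom A B),
      (colax0 Cs B ⊙ id2 (fhom F f)) • colax2 Cs (idm B) f
      = eqc (eq_sym (c1l (fhom F f))) • eqc (f_equal (fhom F) (c1l f));
  colax_counitr : forall (A B : ob K) (f : hom A B),
      (id2 (fhom F f) ⊙ colax0 Cs A) • colax2 Cs f (idm A)
      = eqc (eq_sym (c1r (fhom F f))) • eqc (f_equal (fhom F) (c1r f))
}.

Record bilax_functor (K K' : twocat) := BilaxFunctor {
  bl_F :> prefunctor K K';
  bl_lax : lax_structure bl_F;
  bl_colax : colax_structure bl_F;
  bl_is_lax : is_lax bl_lax;
  bl_is_colax : is_colax bl_colax;
  bl_unit_comul : forall A : ob K,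
      lax0 bl_lax A ⊙ lax0 bl_lax A
      = colax2 bl_colax (idm A) (idm A)
        • eqc (f_equal (fhom bl_F) (eq_sym (c1l (idm A)))) • lax0 bl_lax A
        • eqc (c1l (idm (fob bl_F A)));
  bl_counit_mul : forall A : ob K,
      colax0 bl_colax A ⊙ colax0 bl_colax A
      = eqc (eq_sym (c1l (idm (fob bl_F A)))) • colax0 bl_colax A
        • eqc (f_equal (fhom bl_F) (c1l (idm A))) • lax2 bl_lax (idm A) (idm A);
  bl_counit_unit : forall A : ob K,
      colax0 bl_colax A • lax0 bl_lax A = id2 (idm (fob bl_F A))
}.

Record colax_trans (K K' : twocat) (F G : prefunctor K K') := {
  ct1 : forall A : ob K, hom (fob F A) (fob G A);
  ct2 : forall (A B : ob K) (f : hom A B), c2 (ct1 B ⊚ fhom F f) (fhom G f ⊚ ct1 A)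
}.
Arguments ct1 {K K' F G} _ _.
Arguments ct2 {K K' F G} _ {A B} _.

Record is_colax_trans (K K' : twocat) (F G : prefunctor K K')
    (CF : colax_structure F) (CG : colax_structure G) (p : colax_trans F G) : Prop := {
  ct_nat : forall (A B : ob K) (f f' : hom A B) (α : c2 f f'),
      (fc2 G α ⊙ id2 (ct1 p A)) • ct2 p f = ct2 p f' • (id2 (ct1 p B) ⊙ fc2 F α);
  ct_comp : forall (A B C : ob K) (g : hom B C) (f : hom A B),
      (colax2 CG g f ⊙ id2 (ct1 p A)) • ct2 p (g ⊚ f)
      = eqc (cA (fhom G g) (fhom G f) (ct1 p A)) • (id2 (fhom G g) ⊙ ct2 p f)
        • eqc (eq_sym (cA (fhom G g) (ct1 p B) (fhom F f))) • (ct2 p g ⊙ id2 (fhom F f))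
        • eqc (cA (ct1 p C) (fhom F g) (fhom F f)) • (id2 (ct1 p C) ⊙ colax2 CF g f);
  ct_unit : forall A : ob K,
      (colax0 CG A ⊙ id2 (ct1 p A)) • ct2 p (idm A)
      = eqc (eq_sym (c1l (ct1 p A))) • eqc (c1r (ct1 p A)) • (id2 (ct1 p A) ⊙ colax0 CF A)
}.

Record lax_trans (K K' : twocat) (F G : prefunctor K K') := {
  lt1 : forall A : ob K, hom (fob F A) (fob G A);
  lt2 : forall (A B : ob K) (f : hom A B), c2 (fhom G f ⊚ lt1 A) (lt1 B ⊚ fhom F f)
}.
Arguments lt1 {K K' F G} _ _.
Arguments lt2 {K K' F G} _ {A B} _.

Record is_lax_trans (K K' : twocat) (F G : prefunctor K K')
    (LF : lax_structure F) (LG : lax_structure G) (p : lax_trans F G) : Prop := {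
  lt_nat : forall (A B : ob K) (f f' : hom A B) (α : c2 f f'),
      (id2 (lt1 p B) ⊙ fc2 F α) • lt2 p f = lt2 p f' • (fc2 G α ⊙ id2 (lt1 p A));
  lt_comp : forall (A B C : ob K) (g : hom B C) (f : hom A B),
      lt2 p (g ⊚ f) • (lax2 LG g f ⊙ id2 (lt1 p A))
      = (id2 (lt1 p C) ⊙ lax2 LF g f) • eqc (eq_sym (cA (lt1 p C) (fhom F g) (fhom F f)))
        • (lt2 p g ⊙ id2 (fhom F f)) • eqc (cA (fhom G g) (lt1 p B) (fhom F f))
        • (id2 (fhom G g) ⊙ lt2 p f) • eqc (eq_sym (cA (fhom G g) (fhom G f) (lt1 p A)));
  lt_unit : forall A : ob K,
      lt2 p (idm A) • (lax0 LG A ⊙ id2 (lt1 p A))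
      = (id2 (lt1 p A) ⊙ lax0 LF A) • eqc (eq_sym (c1r (lt1 p A))) • eqc (c1l (lt1 p A))
}.

Record is_left_comodule (K : twocat) (A X : ob K) (d : hom A A)
    (del : c2 d (d ⊚ d)) (eps : c2 d (idm A)) (x : hom X A) (l : c2 x (d ⊚ x)) : Prop := {
  lcomod_coassoc : (del ⊙ id2 x) • l = eqc (cA d d x) • (id2 d ⊙ l) • l;
  lcomod_counit : (eps ⊙ id2 x) • l = eqc (eq_sym (c1l x))
}.

Record is_left_module (K : twocat) (A X : ob K) (m : hom A A)
    (mu : c2 (m ⊚ m) m) (eta : c2 (idm A) m) (x : hom X A) (r : c2 (m ⊚ x) x) : Prop := {
  lmod_assoc : r • (mu ⊙ id2 x) = r • (id2 m ⊙ r) • eqc (eq_sym (cA m m x));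
  lmod_unit : r • (eta ⊙ id2 x) = eqc (c1l x)
}.

From Stdlib Require Import ProofIrrelevance.

(* Whiskering the unit [F^0] into [phi_id] gives a coaction of [phi_A] on the
   comonad [G(id_A)], whose structure comes from the colax structure of [G];
   the bilax axioms of [F] relating [F^0] with [F_0] and [F_2] are exactly what
   the counit and coassociativity laws need.  Since [eta] is a comonoid map
   ([eta o eta = Delta . eta], [eps . eta = 1]), colaxity of [G] makes [G(eta)]
   a comonad map [G(id_A) => G(b)], and coactions push forward along comonad
   maps.  Part (ii) is the formal dual. *)

Section TwoCellCalculus.
Context {K : twocat}.

Lemma vcA {A B : ob K} {f g h k : hom A B} (γ : c2 h k) (β : c2 g h) (α : c2 f g) :
  γ • (β • α) = γ • β • α.
Proof. exact (vcompA (tlaws K) γ β α). Qed.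

Lemma vc1l {A B : ob K} {f g : hom A B} (α : c2 f g) : id2 g • α = α.
Proof. exact (vcomp1l (tlaws K) α). Qed.

Lemma vc1r {A B : ob K} {f g : hom A B} (α : c2 f g) : α • id2 f = α.
Proof. exact (vcomp1r (tlaws K) α). Qed.

Lemma hc_id2 {A B C : ob K} (g : hom B C) (f : hom A B) : id2 g ⊙ id2 f = id2 (g ⊚ f).
Proof. exact (hcomp_id2 (tlaws K) g f). Qed.

Lemma hcA {A B C D : ob K} {h h' : hom C D} {g g' : hom B C} {f f' : hom A B}
    (γ : c2 h h') (β : c2 g g') (α : c2 f f') :
  γ ⊙ (β ⊙ α) = eqc (eq_sym (cA h' g' f')) • ((γ ⊙ β) ⊙ α) • eqc (cA h g f).
Proof. exact (hcompA (tlaws K) γ β α). Qed.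

Lemma hc1r {A B : ob K} {f f' : hom A B} (α : c2 f f') :
  α ⊙ id2 (idm A) = eqc (eq_sym (c1r f')) • α • eqc (c1r f).
Proof. exact (hcomp1r (tlaws K) α). Qed.

Lemma hc_vcl {A B C : ob K} {g g' g'' : hom B C} (β' : c2 g' g'') (β : c2 g g') (f : hom A B) :
  (β' • β) ⊙ id2 f = (β' ⊙ id2 f) • (β ⊙ id2 f).
Proof. now rewrite <- (interchange (tlaws K)), vc1l. Qed.

Lemma hc_vcr {A B C : ob K} (g : hom B C) {f f' f'' : hom A B} (α' : c2 f' f'') (α : c2 f f') :
  id2 g ⊙ (α' • α) = (id2 g ⊙ α') • (id2 g ⊙ α).
Proof. now rewrite <- (interchange (tlaws K)), vc1l. Qed.

Lemma whiskers_hcl {A B C : ob K} {g g' : hom B C} {f f' : hom A B} (β : c2 g g') (α : c2 f f') :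
  (β ⊙ id2 f') • (id2 g ⊙ α) = β ⊙ α.
Proof. now rewrite <- (interchange (tlaws K)), vc1r, vc1l. Qed.

Lemma whiskers_hcr {A B C : ob K} {g g' : hom B C} {f f' : hom A B} (β : c2 g g') (α : c2 f f') :
  (id2 g' ⊙ α) • (β ⊙ id2 f) = β ⊙ α.
Proof. now rewrite <- (interchange (tlaws K)), vc1r, vc1l. Qed.

Lemma whiskers_swap {A B C : ob K} {g g' : hom B C} {f f' : hom A B} (β : c2 g g') (α : c2 f f') :
  (β ⊙ id2 f') • (id2 g ⊙ α) = (id2 g' ⊙ α) • (β ⊙ id2 f).
Proof. now rewrite whiskers_hcl, whiskers_hcr. Qed.

Lemma hc_id2A {A B C D : ob K} (h : hom C D) (g : hom B C) {f f' : hom A B} (α : c2 f f') :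
  id2 h ⊙ (id2 g ⊙ α) = eqc (eq_sym (cA h g f')) • (id2 (h ⊚ g) ⊙ α) • eqc (cA h g f).
Proof. now rewrite hcA, hc_id2. Qed.

Lemma eqc_irr {A B : ob K} {f g : hom A B} (e e' : f = g) : eqc e = eqc e'.
Proof. now rewrite (proof_irrelevance _ e e'). Qed.

Lemma eqc_id {A B : ob K} {f : hom A B} (e : f = f) : eqc e = id2 f.
Proof. now rewrite (proof_irrelevance _ e eq_refl). Qed.

Lemma eqc_trans {A B : ob K} {f g h : hom A B} (e1 : f = g) (e2 : g = h) :
  eqc e2 • eqc e1 = eqc (eq_trans e1 e2).
Proof. destruct e1, e2. exact (vc1l _). Qed.

Lemma hc_eqcr {A B C : ob K} (g : hom B C) {f f' : hom A B} (e : f = f') :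
  id2 g ⊙ eqc e = eqc (f_equal (fun x => g ⊚ x) e).
Proof. destruct e. exact (hc_id2 _ _). Qed.

End TwoCellCalculus.

Section UnitInsertion.
Context {K : twocat}.

Definition rinsert {A B : ob K} (x : hom A B) {h : hom A A} (γ : c2 (idm A) h)
  : c2 x (x ⊚ h) := (id2 x ⊙ γ) • eqc (eq_sym (c1r x)).

Definition rdelete {A B : ob K} (x : hom A B) {h : hom A A} (γ : c2 h (idm A))
  : c2 (x ⊚ h) x := eqc (c1r x) • (id2 x ⊙ γ).

Lemma rinsert_lwhisker {A B C : ob K} (g : hom B C) (x : hom A B) {h : hom A A}
    (γ : c2 (idm A) h) :
  id2 g ⊙ rinsert x γ = eqc (eq_sym (cA g x h)) • rinsert (g ⊚ x) γ.
Proof.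
  unfold rinsert. rewrite hc_vcr, hc_id2A, hc_eqcr, <- !vcA, eqc_trans.
  do 2 f_equal. apply eqc_irr.
Qed.

Lemma rdelete_lwhisker {A B C : ob K} (g : hom B C) (x : hom A B) {h : hom A A}
    (γ : c2 h (idm A)) :
  id2 g ⊙ rdelete x γ = rdelete (g ⊚ x) γ • eqc (cA g x h).
Proof.
  unfold rdelete. rewrite hc_vcr, hc_id2A, hc_eqcr, !vcA, eqc_trans.
  do 2 f_equal. apply eqc_irr.
Qed.

Lemma rinsert_vcomp {A B : ob K} (x : hom A B) {h h' : hom A A} (β : c2 h h')
    (γ : c2 (idm A) h) :
  (id2 x ⊙ β) • rinsert x γ = rinsert x (β • γ).
Proof. unfold rinsert. now rewrite hc_vcr, vcA. Qed.

Lemma rdelete_vcomp {A B : ob K} (x : hom A B) {h h' : hom A A} (γ : c2 h' (idm A))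
    (β : c2 h h') :
  rdelete x γ • (id2 x ⊙ β) = rdelete x (γ • β).
Proof. unfold rdelete. now rewrite hc_vcr, vcA. Qed.

Lemma rinsert_nat {A B : ob K} {x y : hom A B} {k : hom A A} (β : c2 x y) (γ : c2 (idm A) k) :
  (β ⊙ id2 k) • rinsert x γ = rinsert y γ • β.
Proof.
  unfold rinsert. rewrite vcA, (whiskers_swap β γ), hc1r, <- !vcA, eqc_trans, eqc_id, vc1r.
  reflexivity.
Qed.

Lemma rdelete_nat {A B : ob K} {x y : hom A B} {k : hom A A} (β : c2 x y) (γ : c2 k (idm A)) :
  rdelete y γ • (β ⊙ id2 k) = β • rdelete x γ.
Proof.
  unfold rdelete. rewrite <- vcA, <- (whiskers_swap β γ), hc1r, !vcA, eqc_trans, eqc_id, vc1l.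
  reflexivity.
Qed.

Lemma rinsert_double {A B : ob K} (x : hom A B) {k : hom A A} (γ : c2 (idm A) k) :
  rinsert x ((γ ⊙ γ) • eqc (eq_sym (c1l (idm A))))
  = eqc (eq_sym (cA x k k)) • rinsert (x ⊚ k) γ • rinsert x γ.
Proof.
  assert (Hγγ : (γ ⊙ γ) • eqc (eq_sym (c1l (idm A))) = rinsert k γ • γ).
  { unfold rinsert. rewrite <- whiskers_hcr, hc1r, <- !vcA, eqc_trans, eqc_id, vc1r.
    reflexivity. }
  rewrite Hγγ. unfold rinsert at 1. rewrite hc_vcr, rinsert_lwhisker, <- vcA. reflexivity.
Qed.

Lemma rdelete_double {A B : ob K} (x : hom A B) {k : hom A A} (γ : c2 k (idm A)) :
  rdelete x (eqc (c1l (idm A)) • (γ ⊙ γ))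
  = rdelete x γ • rdelete (x ⊚ k) γ • eqc (cA x k k).
Proof.
  assert (Hγγ : eqc (c1l (idm A)) • (γ ⊙ γ) = γ • rdelete k γ).
  { unfold rdelete. rewrite <- whiskers_hcl, hc1r, !vcA, eqc_trans, eqc_id, vc1l.
    reflexivity. }
  rewrite Hγγ. unfold rdelete at 1. rewrite hc_vcr, rdelete_lwhisker, !vcA. reflexivity.
Qed.

End UnitInsertion.

Section Pushforward.
Context {K : twocat} {A X : ob K} {x : hom X A}.

Lemma comodule_pushforward {d e : hom A A} {δd : c2 d (d ⊚ d)} {εd : c2 d (idm A)}
    {δe : c2 e (e ⊚ e)} {εe : c2 e (idm A)} (θ : c2 d e) (ρ : c2 x (d ⊚ x)) :
  (θ ⊙ θ) • δd = δe • θ -> εe • θ = εd ->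
  is_left_comodule δd εd ρ -> is_left_comodule δe εe ((θ ⊙ id2 x) • ρ).
Proof.
  intros Hcomul Hcounit [Hcoassoc Hcounitρ]. split.
  - rewrite vcA, <- hc_vcl, <- Hcomul, hc_vcl, <- vcA, Hcoassoc, hc_vcr, !vcA.
    rewrite <- (vcA _ (id2 e ⊙ ρ)), <- (whiskers_swap θ ρ), !vcA.
    rewrite <- (vcA _ (id2 e ⊙ (θ ⊙ id2 x))), whiskers_hcr, hcA, !vcA.
    rewrite eqc_trans, eqc_id, vc1l.
    reflexivity.
  - now rewrite vcA, <- hc_vcl, Hcounit.
Qed.

Lemma module_pushforward {d e : hom A A} {μd : c2 (d ⊚ d) d} {ηd : c2 (idm A) d}
    {μe : c2 (e ⊚ e) e} {ηe : c2 (idm A) e} (θ : c2 e d) (r : c2 (d ⊚ x) x) :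
  θ • μe = μd • (θ ⊙ θ) -> θ • ηe = ηd ->
  is_left_module μd ηd r -> is_left_module μe ηe (r • (θ ⊙ id2 x)).
Proof.
  intros Hmul Hunit [Hassoc Hunitr]. split.
  - rewrite <- vcA, <- hc_vcl, Hmul, hc_vcl, vcA, Hassoc, hc_vcr, <- !vcA.
    rewrite (vcA (θ ⊙ id2 x) (id2 e ⊙ r)), (whiskers_swap θ r), <- !vcA.
    rewrite (vcA (θ ⊙ id2 (d ⊚ x))), whiskers_hcl, hcA, <- !vcA, eqc_trans, eqc_id, vc1r.
    reflexivity.
  - now rewrite <- vcA, <- hc_vcl, Hunit.
Qed.

End Pushforward.

Lemma fc2_eqc {K K' : twocat} (F : prefunctor K K') {A B : ob K} {f g : hom A B} (e : f = g) :
  fc2 F (eqc e) = eqc (f_equal (fhom F) e).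
Proof. destruct e. apply fc2_id. Qed.

Lemma ct2_eqc {K K' : twocat} {F G : prefunctor K K'} (phi : colax_trans F G) {A B : ob K}
    {f g : hom A B} (e : f = g) :
  (eqc (f_equal (fhom G) e) ⊙ id2 (ct1 phi A)) • ct2 phi f
  = ct2 phi g • (id2 (ct1 phi B) ⊙ eqc (f_equal (fhom F) e)).
Proof. destruct e. cbn. now rewrite !hc_id2, vc1l, vc1r. Qed.

Lemma lt2_eqc {K K' : twocat} {F G : prefunctor K K'} (psi : lax_trans F G) {A B : ob K}
    {f g : hom A B} (e : f = g) :
  lt2 psi g • (eqc (f_equal (fhom G) e) ⊙ id2 (lt1 psi A))
  = (id2 (lt1 psi B) ⊙ eqc (f_equal (fhom F) e)) • lt2 psi f.
Proof. destruct e. cbn. now rewrite !hc_id2, vc1l, vc1r. Qed.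

Definition colax_comul_idm {K K' : twocat} {F : prefunctor K K'} (CF : colax_structure F)
    (A : ob K) : c2 (fhom F (idm A)) (fhom F (idm A) ⊚ fhom F (idm A)) :=
  colax2 CF (idm A) (idm A) • eqc (f_equal (fhom F) (eq_sym (c1l (idm A)))).

Definition lax_mul_idm {K K' : twocat} {F : prefunctor K K'} (LF : lax_structure F)
    (A : ob K) : c2 (fhom F (idm A) ⊚ fhom F (idm A)) (fhom F (idm A)) :=
  eqc (f_equal (fhom F) (c1l (idm A))) • lax2 LF (idm A) (idm A).

Lemma bl_comul_unit {K K' : twocat} (F : bilax_functor K K') (A : ob K) :
  colax_comul_idm (bl_colax F) A • lax0 (bl_lax F) A
  = (lax0 (bl_lax F) A ⊙ lax0 (bl_lax F) A) • eqc (eq_sym (c1l (idm (fob F A)))).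
Proof.
  unfold colax_comul_idm.
  now rewrite bl_unit_comul, <- (vcA _ (eqc (c1l _))), eqc_trans, eqc_id, vc1r.
Qed.

Lemma bl_counit_mul_idm {K K' : twocat} (F : bilax_functor K K') (A : ob K) :
  colax0 (bl_colax F) A • lax_mul_idm (bl_lax F) A
  = eqc (c1l (idm (fob F A))) • (colax0 (bl_colax F) A ⊙ colax0 (bl_colax F) A).
Proof. unfold lax_mul_idm. now rewrite bl_counit_mul, !vcA, eqc_trans, eqc_id, vc1l. Qed.

Section UnitCoaction.
Context {K K' : twocat} {F : bilax_functor K K'} {G : prefunctor K K'}.
Context {CG : colax_structure G}.
Variable phi : colax_trans F G.
Hypothesis Hphi : is_colax_trans (bl_colax F) CG phi.
Variable A : ob K.

Definition unit_coaction : c2 (ct1 phi A) (fhom G (idm A) ⊚ ct1 phi A) :=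
  ct2 phi (idm A) • rinsert (ct1 phi A) (lax0 (bl_lax F) A).

Lemma unit_coaction_comodule :
  is_left_comodule (colax_comul_idm CG A) (colax0 CG A) unit_coaction.
Proof.
  unfold unit_coaction. split.
  - unfold colax_comul_idm. rewrite hc_vcl, !vcA.
    rewrite <- (vcA _ _ (ct2 phi _)), ct2_eqc, !vcA, <- (vcA _ _ (ct2 phi _)), (ct_comp Hphi).
    rewrite <- vcA, rinsert_vcomp, <- vcA, rinsert_vcomp, vcA.
    change (colax2 _ _ _ • eqc _) with (colax_comul_idm (bl_colax F) A).
    rewrite bl_comul_unit, rinsert_double, !vcA, <- (vcA _ (eqc _) (eqc _)).
    rewrite eqc_trans, eqc_id, vc1r, <- (vcA _ (ct2 phi (idm A) ⊙ _) (rinsert _ _)).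
    rewrite rinsert_nat, hc_vcr, rinsert_lwhisker, !vcA.
    reflexivity.
  - rewrite vcA, (ct_unit Hphi), <- vcA, rinsert_vcomp, (bl_counit_unit F).
    unfold rinsert. rewrite hc_id2, vc1l, !eqc_trans. apply eqc_irr.
Qed.
End UnitCoaction.

Section CounitAction.
Context {K K' : twocat} {F : bilax_functor K K'} {G : prefunctor K K'}.
Context {LG : lax_structure G}.
Variable psi : lax_trans F G.
Hypothesis Hpsi : is_lax_trans (bl_lax F) LG psi.
Variable A : ob K.

Definition counit_action : c2 (fhom G (idm A) ⊚ lt1 psi A) (lt1 psi A) :=
  rdelete (lt1 psi A) (colax0 (bl_colax F) A) • lt2 psi (idm A).

Lemma counit_action_module : is_left_module (lax_mul_idm LG A) (lax0 LG A) counit_action.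
Proof.
  unfold counit_action. split.
  - unfold lax_mul_idm. rewrite hc_vcl, <- !vcA.
    rewrite (vcA (lt2 psi _)), lt2_eqc, <- !vcA, (vcA (lt2 psi _)), (lt_comp Hpsi).
    rewrite !vcA, !rdelete_vcomp, <- (vcA (colax0 _ A)).
    change (eqc _ • lax2 _ _ _) with (lax_mul_idm (bl_lax F) A).
    rewrite bl_counit_mul_idm, rdelete_double, <- !vcA, (vcA (eqc _) (eqc _)).
    rewrite eqc_trans, eqc_id, vc1l, (vcA (rdelete _ _) (lt2 psi (idm A) ⊙ _)).
    rewrite rdelete_nat, hc_vcr, rdelete_lwhisker, !vcA.
    reflexivity.
  - rewrite <- vcA, (lt_unit Hpsi), !vcA, rdelete_vcomp, (bl_counit_unit F).
    unfold rdelete. rewrite hc_id2, vc1r, !eqc_trans. apply eqc_irr.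
Qed.
End CounitAction.

Section FunctorialBimonadMaps.
Context {K K' : twocat} {G : prefunctor K K'} {A : ob K} {b : hom A A}.
Context (eta : c2 (idm A) b) (eps : c2 b (idm A)).

Lemma fc2_counit_unit :
  eps • eta = id2 (idm A) -> fc2 G eps • fc2 G eta = id2 (fhom G (idm A)).
Proof. intros Hεη. now rewrite <- fc2_comp, Hεη, fc2_id. Qed.

Lemma colax_fc2_unit_comul {CG : colax_structure G} (HCG : is_colax CG) (del : c2 b (b ⊚ b)) :
  eta ⊙ eta = del • eta • eqc (c1l (idm A)) ->
  (fc2 G eta ⊙ fc2 G eta) • colax_comul_idm CG A = colax2 CG b b • fc2 G del • fc2 G eta.
Proof.
  intros Hηη. unfold colax_comul_idm.
  rewrite vcA, (colax2_nat HCG), Hηη, !fc2_comp, fc2_eqc, <- !vcA, eqc_trans, eqc_id, vc1r.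
  reflexivity.
Qed.

Lemma lax_fc2_counit_mul {LG : lax_structure G} (HLG : is_lax LG) (mu : c2 (b ⊚ b) b) :
  eps ⊙ eps = eqc (eq_sym (c1l (idm A))) • eps • mu ->
  fc2 G eps • (fc2 G mu • lax2 LG b b) = lax_mul_idm LG A • (fc2 G eps ⊙ fc2 G eps).
Proof.
  intros Hεε. unfold lax_mul_idm.
  rewrite <- (vcA _ (lax2 _ _ _)), <- (lax2_nat HLG), Hεε, !fc2_comp, fc2_eqc, !vcA.
  rewrite eqc_trans, eqc_id, vc1l.
  reflexivity.
Qed.

End FunctorialBimonadMaps.

Theorem proposition4p13 (K K' : twocat) (c : yb_data K) (Hc : is_YB c)
  (F G : bilax_functor K K')
  (A : ob K) (b : hom A A) (mu : c2 (b ⊚ b) b) (eta : c2 (idm A) b)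
  (del : c2 b (b ⊚ b)) (eps : c2 b (idm A))
  (Hb : is_c_bimonad c mu eta del eps) :
  (forall phi : colax_trans F G,
     is_colax_trans (bl_colax F) (bl_colax G) phi ->
     is_left_comodule
       (colax2 (bl_colax G) b b • fc2 G del)
       (colax0 (bl_colax G) A • fc2 G eps)
       ((fc2 G eta ⊙ id2 (ct1 phi A)) • ct2 phi (idm A)
          • (id2 (ct1 phi A) ⊙ lax0 (bl_lax F) A) • eqc (eq_sym (c1r (ct1 phi A)))))
  /\
  (forall psi : lax_trans F G,
     is_lax_trans (bl_lax F) (bl_lax G) psi ->
     is_left_module
       (fc2 G mu • lax2 (bl_lax G) b b)
       (fc2 G eta • lax0 (bl_lax G) A)
       (eqc (c1r (lt1 psi A)) • (id2 (lt1 psi A) ⊙ colax0 (bl_colax F) A)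
          • lt2 psi (idm A) • (fc2 G eps ⊙ id2 (lt1 psi A)))).
Proof.
  destruct Hb as [_ _ _ _ _ Hεε Hηη Hεη]. split.
  - intros phi Hphi. rewrite <- !vcA.
    refine (comodule_pushforward (fc2 G eta) _ _ _ (unit_coaction_comodule phi Hphi A)).
    + exact (colax_fc2_unit_comul eta (bl_is_colax G) del Hηη).
    + now rewrite <- vcA, (fc2_counit_unit eta eps Hεη), vc1r.
  - intros psi Hpsi.
    refine (module_pushforward (fc2 G eps) _ _ _ (counit_action_module psi Hpsi A)).
    + exact (lax_fc2_counit_mul eps (bl_is_lax G) mu Hεε).
    + now rewrite vcA, (fc2_counit_unit eta eps Hεη), vc1l.
Qed.
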